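(* Let $g$ be a positive integer and $t\ge 1$. Let $t=\sum_{i=1}^m 2^{u_i}$ be the binary expansion of $t$ with $0\le u_1<u_2<\cdots<u_m$, let $s_k=\sum_{i=k}^m 2^{u_i}$ for $k=1,\ldots,m$, and let $u_0=-1$. Then for $s\in\{1,\ldots,t\}$, $h_t(s)=1$ if and only if $s=s_k-j2^u$ for some $k\in\{1,\ldots,m\}$, some integer $u$ with $u_{k-1}<u\le u_k$ and some $j\in\{0,\ldots,g-1\}$ such that $2^u$ is the largest power of $2$ dividing $s$; in particular $j$ is even if $u=u_k$ and odd otherwise. As a consequence, at any time instant $t$ there are at most $\lceil g/2\rceil(\lfloor\log t\rfloor+1)$ segments that are valid and alive.
   Context: $\log$ denotes base-2 logarithm. For a parameter $g$ and integers $s\ge1$, $t\ge1$: write $s=o2^u$ with $o$ odd and $u\ge0$ (so $2^u$ is the largest power of 2 dividing $s$), and set $h_t(s)=1$ if $s\le t<s+g2^u$ and $h_t(s)=0$ otherwise. Markov weights: given switch probabilities $p(t|t')\in(0,1)$ for $1\le t'<t$, let $\{U_t\}$ be the Markov chain with $U_1=1$ and, for $t'<t$, $\Pr(U_t=t\mid U_{t-1}=t')=p(t|t')=1-\Pr(U_t=t'\mid U_{t-1}=t')$. A transition path $T=(t_1,\ldots,t_C;t)$ (with $1<t_1<\cdots<t_C\le t$) corresponds to the realization $(u_1,\ldots,u_t)$ with $u_{k-1}\ne u_k$ exactly for $k\in\{t_1,\ldots,t_C\}$, and the weight is $w_t(T)=\Pr(U_1=u_1,\ldots,U_t=u_t)$.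 The pruned switch probabilities are $\hat p(t|t')=1-h_t(t')(1-p(t|t'))$, and $\hat w_t$ is the weight function obtained from $\hat p$ in the same way. The segments of a path $T\in\mathcal T_t$ are the intervals $[t_c,t_{c+1})$ between consecutive switch points (with $t_0=1$). A segment is alive at time $t$ if it contains $t$, and valid if there is a path $T_t$ with $\hat w_t(T_t)>0$ that contains exactly that segment. *)

From HB Require Import structures.
From mathcomp Require Import all_boot all_order all_algebra.
Set Implicit Arguments. Unset Strict Implicit. Unset Printing Implicit Defensive.
Import Order.TTheory GRing.Theory Num.Theory.
Local Open Scope ring_scope.

Definition h (g t s : nat) : bool := ((s <= t) && (t < s + g * 2 ^ logn 2 s))%N.

(* A transition path (t_1,...,t_C; t) is represented by the list of switch
   times ts = [:: t_1; ...; t_C], with 1 < t_1 < ... < t_C <= t. *)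
Definition is_tpath (t : nat) (ts : seq nat) : bool :=
  (sorted ltn ts && all (fun x => (1 < x) && (x <= t)) ts)%N.

(* the realization u_k of the path: the last switch time <= k (or 1). *)
Definition cur (ts : seq nat) (k : nat) : nat :=
  foldr maxn 1%N [seq i <- ts | (i <= k)%N].

(* w_t(T) = Pr(U_1 = u_1, ..., U_t = u_t) for the Markov chain with switch
   probabilities p(k | k'), U_1 = 1. *)
Definition weight (R : pzRingType) (p : nat -> nat -> R) (t : nat) (ts : seq nat) : R :=
  \prod_(2 <= k < t.+1)
     (if k \in ts then p k (cur ts k.-1) else 1 - p k (cur ts k.-1)).

Definition phat (R : pzRingType) (g : nat) (p : nat -> nat -> R) : nat -> nat -> R :=
  fun k k' => 1 - (h g k k')%:R * (1 - p k k').

(* segments [t_c, t_{c+1}) of a path in T_t, with t_0 = 1 and t_{C+1} = t+1;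
   a segment [a, b) is encoded as the pair (a, b). *)
Definition segments (t : nat) (ts : seq nat) : seq (nat * nat) :=
  let b := 1%N :: rcons ts t.+1 in zip b (behead b).

Definition alive (t : nat) (seg : nat * nat) : bool := ((seg.1 <= t) && (t < seg.2))%N.

Definition valid (R : numDomainType) (g : nat) (p : nat -> nat -> R) (t : nat)
  (seg : nat * nat) : Prop :=
  exists ts, [/\ is_tpath t ts, 0 < weight (phat g p) t ts & seg \in segments t ts].

(* s_k (0-indexed k) = \sum_{i >= k} 2^{u_i} *)
Definition sk (us : seq nat) (k : nat) : nat :=
  (\sum_(k <= i < size us) 2 ^ nth 0 us i)%N.

(* An integer s with 2-adic valuation u is s = o 2^u with o odd.  Splitting t
   at the first bit u_k >= u gives t = (low bits < 2^u) + s_k with s_k = Q 2^u,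
   Q odd iff u = u_k; then s <= t < s + g 2^u pins o to Q - j with j < g.  For
   the bound, a segment that is alive at t must be the last one [t_C, t + 1),
   and a positive pruned weight forces h_t(t_C) = 1.  For fixed u, the times s
   with h_t(s) = 1 and valuation u are o 2^u for odd o among the g consecutive
   integers ending at t / 2^u, hence at most ceil(g/2) of them, and u ranges
   over 0..floor(log t). *)
From HB Require Import structures.
From mathcomp Require Import all_boot all_order all_algebra.
From mathcomp Require Import zify.
Import Order.TTheory GRing.Theory Num.Theory.

Set Implicit Arguments.
Unset Strict Implicit.
Unset Printing Implicit Defensive.

Lemma odd_part_decomp s : 0 < s -> exists2 o, odd o & s = o * 2 ^ logn 2 s.
Proof.
move=> s_gt0; have [o co s_def] := pfactor_coprime (p := 2) isT s_gt0.
by exists o => //; rewrite -coprime2n.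
Qed.

Section BinaryExpansion.

Variable us : seq nat.
Hypothesis sorted_us : sorted ltn us.

Lemma nth_us_ltn i j : i < j -> j < size us -> nth 0 us i < nth 0 us j.
Proof.
move=> lt_ij lt_j; apply: (sorted_ltn_nth ltn_trans) => //; rewrite inE //.
exact: ltn_trans lt_ij lt_j.
Qed.

Definition lower_sum k := (\sum_(0 <= i < k) 2 ^ nth 0 us i).

Lemma lower_sum_lt k u : k <= size us ->
  (k = 0 \/ nth 0 us k.-1 < u) -> lower_sum k < 2 ^ u.
Proof.
elim: k u => [|k IH] u le_k hk; first by rewrite /lower_sum big_geq // expn_gt0.
have lt_uk : (nth 0 us k < u) by case: hk.
have : (lower_sum k < 2 ^ nth 0 us k).
  apply: IH (ltnW le_k) _.
  by case: k le_k {lt_uk hk} => [|k] le_k; [left | right; apply: nth_us_ltn].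
have := leq_pexp2l (isT : 0 < 2) lt_uk.
rewrite /lower_sum big_nat_recr //= -/(lower_sum k) expnS; lia.
Qed.

Lemma sum_us_split k : k <= size us ->
  \sum_(x <- us) 2 ^ x = lower_sum k + sk us k.
Proof. by move=> le_k; rewrite (big_nth 0) /lower_sum /sk (@big_cat_nat _ _ _ k). Qed.

Lemma sk_pow2_factor k u : k < size us -> u <= nth 0 us k ->
  exists2 Q, sk us k = Q * 2 ^ u & odd Q = (u == nth 0 us k).
Proof.
move=> lt_k le_u.
have : (2 ^ (nth 0 us k).+1 %| \sum_(k.+1 <= i < size us) 2 ^ nth 0 us i).
  rewrite big_nat_cond; apply: dvdn_sum => i /andP [/andP [lt_ki lt_i] _].
  by apply: dvdn_exp2l; apply: nth_us_ltn.
case/dvdnP=> r high.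
exists (2 ^ (nth 0 us k - u) * (2 * r).+1).
  rewrite /sk big_ltn // high expnS.
  have -> : (2 ^ nth 0 us k = 2 ^ (nth 0 us k - u) * 2 ^ u) by rewrite -expnD subnK.
  nia.
rewrite oddM oddX /= oddM andFb andbT; apply/eqP/eqP; lia.
Qed.

End BinaryExpansion.

Section Characterization.

Variables (g t : nat) (us : seq nat).
Hypotheses (sorted_us : sorted ltn us) (t_def : t = \sum_(x <- us) 2 ^ x).

Lemma h_binary_repr s : 1 <= s <= t -> h g t s ->
  exists k u j : nat,
    [/\ k < size us, k = 0 \/ nth 0 us k.-1 < u, u <= nth 0 us k, j < g
      & s = sk us k - j * 2 ^ u /\ logn 2 s = u].
Proof.
move=> /andP [s_gt0 le_st] /andP [_ lt_t].
set u := logn 2 s in lt_t *.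
have [o odd_o s_def] := odd_part_decomp s_gt0; rewrite -/u in s_def.
have pow_gt0 : (0 < 2 ^ u) by rewrite expn_gt0.
pose k := find (fun x => u <= x) us.
have hk : k = 0 \/ (nth 0 us k.-1 < u).
  case E: k => [|k']; [by left | right].
  have := @before_find _ 0 (fun x => u <= x) us k'; rewrite -/k E ltnSn.
  by move=> /(_ isT) /negbT; rewrite -ltnNge.
have le_k : (k <= size us) by exact: find_size.
have low_lt := lower_sum_lt sorted_us le_k hk.
have t_split := sum_us_split le_k; rewrite -t_def in t_split.
have lt_k : (k < size us).
  rewrite ltn_neqAle le_k andbT; apply/negP => /eqP k_end.
  move: t_split; rewrite /sk k_end big_geq // addn0 => t_low.
  have : (2 ^ u <= s) by rewrite s_def leq_pmull //; case: o odd_o {s_def}.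
  rewrite k_end in low_lt; lia.
have le_u : (u <= nth 0 us k).
  by apply: (@nth_find _ 0 (fun x => u <= x) us); rewrite has_find.
have [Q sk_def _] := sk_pow2_factor sorted_us lt_k le_u.
rewrite sk_def in t_split.
have le_oQ : (o <= Q).
  rewrite leqNgt; apply/negP => lt_Qo.
  have : (Q.+1 * 2 ^ u <= o * 2 ^ u) by rewrite leq_mul2r lt_Qo orbT.
  lia.
have lt_Q : (Q < o + g).
  rewrite ltnNge; apply/negP => le_Q.
  have : ((o + g) * 2 ^ u <= Q * 2 ^ u) by rewrite leq_mul2r le_Q orbT.
  lia.
exists k, u, (Q - o); split => //; first lia.
by rewrite sk_def -mulnBl subKn.
Qed.

Lemma binary_repr_h s k u j : 1 <= s <= t ->
  k < size us -> (k = 0 \/ nth 0 us k.-1 < u) -> j < g ->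
  s = sk us k - j * 2 ^ u -> logn 2 s = u -> h g t s.
Proof.
move=> /andP [s_gt0 le_st] lt_k hk lt_j s_def logs.
rewrite /h le_st logs.
have low_lt := lower_sum_lt sorted_us (ltnW lt_k) hk.
have := sum_us_split (ltnW lt_k); rewrite -t_def.
have : (j.+1 * 2 ^ u <= g * 2 ^ u) by rewrite leq_mul2r lt_j orbT.
have : (0 < 2 ^ u) by rewrite expn_gt0.
nia.
Qed.

Lemma binary_repr_odd s k u j : 0 < s ->
  k < size us -> u <= nth 0 us k ->
  s = sk us k - j * 2 ^ u -> logn 2 s = u -> odd j = (u != nth 0 us k).
Proof.
move=> s_gt0 lt_k le_u s_def logs.
have [o odd_o s_o] := odd_part_decomp s_gt0; rewrite logs in s_o.
have [Q sk_def odd_Q] := sk_pow2_factor sorted_us lt_k le_u.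
rewrite sk_def -mulnBl in s_def.
have o_def : o = (Q - j).
  by apply/eqP; rewrite -(eqn_pmul2r (expn_gt0 2 u)) -s_o -s_def.
have le_jQ : (j <= Q).
  by rewrite leqNgt; apply: contraTN odd_o => lt_Qj; rewrite o_def (eqP (ltnW lt_Qj)).
move: odd_o; rewrite o_def oddB // -odd_Q.
by case: (odd Q) (odd j) => [] [].
Qed.

End Characterization.

Lemma count_odd_iota n m : count odd (iota m n) = (n + odd m)./2.
Proof.
elim: n m => [|n IH] m; first by case: (odd m).
by rewrite /= IH /=; case: (odd m); rewrite /= ?addn0 ?addn1 ?addnS.
Qed.

Lemma size_le_fibers (T : eqType) (f : T -> nat) c n (s : seq T) :
  (forall x, x \in s -> f x < n) ->
  (forall u, count (fun x => f x == u) s <= c) -> size s <= n * c.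
Proof.
elim: n s => [|n IH] s f_lt fiber_le.
  by case: s f_lt {fiber_le} => // x s /(_ x (mem_head _ _)).
rewrite -(count_predC (fun x => f x == n) s) mulSn leq_add // -size_filter.
apply: IH => [x | u].
  by rewrite mem_filter => /andP [/= ne_n /f_lt]; rewrite ltnS ltn_neqAle ne_n.
rewrite count_filter; apply: leq_trans (fiber_le u).
by apply: sub_count => x /andP [].
Qed.

Section PrunedTimes.

Variables (g t : nat).

Definition pruned_times := [seq s <- iota 1 t | h g t s].

Lemma count_logn_pruned_times u :
  count (fun s => logn 2 s == u) pruned_times <= g.+1./2.
Proof.
set P := (2 ^ u); have P_gt0 : (0 < P) by rewrite expn_gt0.
set q := (t %/ P); set m := (q.+1 - g); set n := (q.+1 - m).
set B := [seq s <- pruned_times | logn 2 s == u].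
have B_odd_mul s : s \in B -> exists2 o, odd o & s = (o * P) /\ (m <= o < m + n).
  rewrite !mem_filter mem_iota => /andP [/eqP logs /andP [hs /andP [s_gt0 _]]].
  have [o odd_o s_def] := odd_part_decomp s_gt0; rewrite logs in s_def.
  exists o => //; split => //.
  move: hs; rewrite /h logs => /andP [le_st lt_t].
  have : (o <= q) by rewrite leq_divRL // -s_def.
  have : (q < o + g) by rewrite ltn_divLR // mulnDl -s_def.
  rewrite /n /m; lia.
have inj_div : {in B &, injective (fun s => s %/ P)}.
  by move=> a b /B_odd_mul [o _ [-> _]] /B_odd_mul [o' _ [-> _]]; rewrite !mulnK // => ->.
rewrite -size_filter -/B -(size_map (fun s => s %/ P)).
apply: (@leq_trans (size [seq o <- iota m n | odd o])).
  apply: uniq_leq_size; first by rewrite map_inj_in_uniq // !filter_uniq ?iota_uniq.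
  move=> o /mapP [s /B_odd_mul [o' odd_o' [-> range]] ->].
  by rewrite mulnK // mem_filter odd_o' mem_iota.
rewrite size_filter count_odd_iota; apply: half_leq.
case: (odd m); rewrite /n /m; lia.
Qed.

Lemma size_pruned_times : size pruned_times <= g.+1./2 * (trunc_log 2 t).+1.
Proof.
rewrite mulnC; apply: (@size_le_fibers _ (logn 2)); last exact: count_logn_pruned_times.
move=> s; rewrite mem_filter mem_iota => /andP [_ /andP [s_gt0 lt_s]].
rewrite ltnS; apply: trunc_log_max => //.
have [o odd_o s_def] := odd_part_decomp s_gt0.
apply: leq_trans (_ : s <= t); last lia.
by rewrite {2}s_def leq_pmull //; case: o odd_o {s_def}.
Qed.

End PrunedTimes.

Lemma alive_segment_last t T ts x seg : all (fun y => y <= t) ts -> t < T ->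
  seg \in zip (x :: rcons ts T) (rcons ts T) -> alive t seg -> seg = (last x ts, T).
Proof.
elim: ts x => [|y ts IH] x /=; first by move=> _ _; rewrite mem_seq1 => /eqP.
case/andP=> le_yt le_ts lt_tT; rewrite in_cons => /orP [/eqP -> | ?]; last exact: IH.
by rewrite /alive /= => /andP [_ lt_ty]; move: (leq_trans lt_ty le_yt); rewrite ltnn.
Qed.

Lemma path_ltn_le_last x s : path ltn x s -> forall y, y \in x :: s -> y <= last x s.
Proof.
elim: s x => [|z s IH] x /=; first by move=> _ y; rewrite mem_seq1 => /eqP ->.
case/andP=> lt_xz path_z y; rewrite in_cons => /orP [/eqP ->|]; last exact: IH.
by apply: leq_trans (ltnW lt_xz) _; apply: IH; rewrite ?mem_head.
Qed.

Lemma foldr_maxn_ge z s y : y \in z :: s -> y <= foldr maxn z s.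
Proof.
elim: s => [|w s IH] /=; first by rewrite mem_seq1 => /eqP ->.
rewrite !in_cons leq_max => /orP [/eqP y_z|/orP [/eqP ->|y_s]]; rewrite ?leqnn //.
- by rewrite IH ?orbT // y_z mem_head.
- by rewrite IH ?orbT // in_cons y_s orbT.
Qed.

Lemma foldr_maxn_mem z s : foldr maxn z s \in z :: s.
Proof.
elim: s => [|w s IH] /=; first exact: mem_head.
rewrite /maxn; case: ltnP => _; last by rewrite !in_cons eqxx orbT.
by move: IH; rewrite !in_cons => /orP [->|->]; rewrite ?orbT.
Qed.

Local Open Scope ring_scope.

(* If the last switch t_C < t had h_t(t_C) = 0, the factor at time t of the
   pruned weight would be 1 - p^(t | t_C) = 0. *)
Lemma pruned_weight_gt0_h_last (R : numDomainType) g t (p : nat -> nat -> R) ts :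
  (0 < g)%N -> (1 <= t)%N -> is_tpath t ts -> 0 < weight (phat g p) t ts ->
  h g t (last 1%N ts).
Proof.
move=> g_gt0 t_gt0 /andP [sorted_ts /allP ts_range] w_gt0.
have path_ts : path ltn 1%N ts.
  by case: ts sorted_ts ts_range {w_gt0} => //= y ts -> /(_ y (mem_head _ _)) /andP [-> _].
have le_last := path_ltn_le_last path_ts.
have last_le : (last 1 ts <= t)%N.
  by move: (mem_last 1%N ts); rewrite in_cons => /orP [/eqP ->|/ts_range /andP []].
have [-> | ne_last] := eqVneq (last 1%N ts) t.
  by rewrite /h leqnn /= -{1}[t]addn0 ltn_add2l muln_gt0 g_gt0 expn_gt0.
have t_notin : t \notin ts.
  apply/negP => t_ts; have := le_last t; rewrite in_cons t_ts orbT => /(_ isT); lia.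
have last_gt0 : (1 <= last 1 ts)%N by apply: le_last; exact: mem_head.
have cur_last : cur ts t.-1 = last 1%N ts.
  rewrite /cur (_ : filter _ ts = ts); last first.
    apply/all_filterP/allP => x x_ts; have := ts_range x x_ts.
    have : x != t by apply: contraNneq t_notin => <-.
    lia.
  by apply: anti_leq; rewrite foldr_maxn_ge ?mem_last // le_last // foldr_maxn_mem.
move: w_gt0; rewrite /weight big_nat_recr /=; last lia.
rewrite (negbTE t_notin) cur_last /phat.
by case: (h g t (last 1%N ts)); rewrite // mul0r subr0 subrr mulr0 ltxx.
Qed.

Lemma valid_alive_segment (R : numDomainType) g t (p : nat -> nat -> R) seg :
  (0 < g)%N -> (1 <= t)%N -> valid g p t seg -> alive t seg ->
  seg.2 = t.+1 /\ seg.1 \in pruned_times g t.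
Proof.
move=> g_gt0 t_gt0 [ts [tp w_gt0 seg_ts]] seg_alive.
have /andP [_ /allP ts_range] := tp.
have le_ts : all (fun y => y <= t)%N ts by apply/allP => y /ts_range /andP [].
rewrite (alive_segment_last le_ts (ltnSn t) seg_ts seg_alive); split => //.
rewrite mem_filter mem_iota (pruned_weight_gt0_h_last g_gt0 t_gt0 tp w_gt0) /= add1n ltnS.
move: (mem_last 1%N ts); rewrite in_cons => /orP [/eqP -> // | /ts_range /andP [lt1 ->]].
by rewrite andbT ltnW.
Qed.

Theorem lemma2 (R : realFieldType) (g t : nat) (us : seq nat)
    (p : nat -> nat -> R) :
  (0 < g)%N -> (1 <= t)%N ->
  sorted ltn us -> t = (\sum_(x <- us) 2 ^ x)%N ->
  (forall a b : nat, (1 <= b < a)%N -> 0 < p a b < 1) ->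
  (forall s : nat, (1 <= s <= t)%N ->
     (h g t s <->
      exists k u j : nat,
        [/\ (k < size us)%N, k = 0%N \/ (nth 0%N us k.-1 < u)%N,
            (u <= nth 0%N us k)%N, (j < g)%N
          & s = (sk us k - j * 2 ^ u)%N /\ logn 2 s = u])
     /\ (forall k u j : nat,
           (k < size us)%N -> (k = 0%N \/ (nth 0%N us k.-1 < u)%N) ->
           (u <= nth 0%N us k)%N -> (j < g)%N ->
           s = (sk us k - j * 2 ^ u)%N -> logn 2 s = u ->
           odd j = (u != nth 0%N us k)))
  /\
  (forall S : seq (nat * nat), uniq S ->
     (forall seg, seg \in S -> valid g p t seg /\ alive t seg) ->
     (size S <= (g.+1)./2 * (trunc_log 2 t).+1)%N).
Proof.
move=> g_gt0 t_gt0 sorted_us t_def _; split=> [s s_range | S uniq_S S_valid].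
  split; [split | move=> k u j lt_k _ le_u _].
  - exact: h_binary_repr.
  - by case=> k [u [j [lt_k hk _ lt_j [s_def logs]]]]; apply: binary_repr_h s_def logs.
  - by case/andP: s_range => s_gt0 _; apply: binary_repr_odd.
have S_last seg : seg \in S -> seg.2 = t.+1 /\ seg.1 \in pruned_times g t.
  by move=> /S_valid [valid_seg alive_seg]; apply: valid_alive_segment valid_seg alive_seg.
rewrite -(size_map fst); apply: leq_trans (size_pruned_times g t).
apply: uniq_leq_size => [|_ /mapP [seg /S_last [_ ?] ->] //].
by rewrite map_inj_in_uniq // => [[a1 a2] [b1 b2]] /S_last [/= -> _] /S_last [/= -> _] /= ->.
Qed.
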